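(* Let $G=\{1,\dots,d\}^2$ and run the following randomized procedure. Initialize $S=\emptyset$, $B=\emptyset$, $\mathsf{Flag}=x$. Sample $g\in G$ uniformly at random and set $B=\{g\}$, $S=\{g\}$. Then, while $S\ne G$, sample $g=(g_x,g_y)\in G$ uniformly at random (independently) and: if $\mathsf{Flag}=x$, $g_x\in S_x$ and $g\notin S$, set $B=B\cup\{g\}$, $S=S\cup(S_x\times\{g_y\})$, $\mathsf{Flag}=y$; if $\mathsf{Flag}=y$, $g_y\in S_y$ and $g\notin S$, set $B=B\cup\{g\}$, $S=S\cup(\{g_x\}\times S_y)$, $\mathsf{Flag}=x$; otherwise do nothing. Here $S_x$ (resp. $S_y$) is the set of first (resp. second) coordinates appearing in $S$. Then for $c>0$: if the number of sampled groups is greater than $8cd\log d$, then $G\subseteq\mathsf{DAff}(B)$ with probability greater than or equal to $1-\frac1c$.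
   Context: For $z=(z_1,z_2)\in G$, $\sigma(z)\in\{0,1\}^{2d}$ is the concatenation of the one-hot encodings of $z_1$ and $z_2$. For a finite $\mathcal{A}=\{z^{(1)},\dots,z^{(k)}\}\subseteq G$, $\mathsf{DAff}(\mathcal{A})=\{z\in G:\exists\alpha\in\mathbb{R}^k,\ \sum_i\alpha_i=1,\ \sigma(z)=\sum_i\alpha_i\sigma(z^{(i)})\}$. *)

From HB Require Import structures.
From mathcomp Require Import all_boot all_order all_algebra.
From mathcomp Require Import boolp reals exp.
Set Implicit Arguments. Unset Strict Implicit. Unset Printing Implicit Defensive.
Import Order.TTheory GRing.Theory Num.Theory.
Local Open Scope ring_scope.

(* The grid G = {1..d}^2, represented as 'I_d * 'I_d. *)
Definition grid (d : nat) : finType := ('I_d * 'I_d)%type.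

(* sigma(z) in {0,1}^{2d}: concatenation of the one-hot encodings of z1, z2;
   coordinates indexed by 'I_d + 'I_d (inl = first block, inr = second). *)
Definition sigma (R : nzRingType) (d : nat) (z : grid d) : 'I_d + 'I_d -> R :=
  fun j => match j with
           | inl i => (z.1 == i)%:R
           | inr i => (z.2 == i)%:R
           end.

Definition DAff (R : nzRingType) (d : nat) (A : {set grid d}) : grid d -> Prop :=
  fun z => exists alpha : grid d -> R,
      \sum_(a in A) alpha a = 1 /\
      forall j, sigma R z j = \sum_(a in A) alpha a * sigma R a j.

(* State of the procedure: (S, B, Flag) with Flag = true meaning "x". *)
Definition state (d : nat) := ({set grid d} * {set grid d} * bool)%type.

Definition Sx d (S : {set grid d}) : {set 'I_d} := [set p.1 | p in S].
Definition Sy d (S : {set grid d}) : {set 'I_d} := [set p.2 | p in S].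

Definition init_state d (g : grid d) : state d := ([set g], [set g], true).

(* One iteration of the while loop on sample g; once S = G the loop has
   terminated and further samples change nothing. *)
Definition step d (st : state d) (g : grid d) : state d :=
  let: (Sc, Bc, fx) := st in
  if Sc == [set: grid d] then st else
  if fx then
    (if (g.1 \in Sx Sc) && (g \notin Sc)
     then (Sc :|: setX (Sx Sc) [set g.2], g |: Bc, false) else st)
  else
    (if (g.2 \in Sy Sc) && (g \notin Sc)
     then (Sc :|: setX [set g.1] (Sy Sc), g |: Bc, true) else st).

Definition run d (s : seq (grid d)) : state d :=
  match s with
  | [::] => (set0, set0, true)
  | g :: s' => foldl (@step d) (init_state g) s'
  end.

Definition final_B d N (w : {ffun 'I_N -> grid d}) : {set grid d} :=
  (run [seq w i | i <- enum 'I_N]).1.2.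

(* Probability, under N independent uniform samples from G, of event E. *)
Definition unif_prob (R : realType) d N (E : {ffun 'I_N -> grid d} -> Prop) : R :=
  (#|[set w : {ffun 'I_N -> grid d} | `[< E w >] ]|)%:R
  / (#|{: {ffun 'I_N -> grid d}}|)%:R.

From HB Require Import structures.
From mathcomp Require Import all_boot all_order all_algebra.
From mathcomp Require Import boolp reals exp.
From mathcomp Require Import ring lra.
Import Order.TTheory GRing.Theory Num.Theory.
Local Open Scope ring_scope.
Set Implicit Arguments. Unset Strict Implicit. Unset Printing Implicit Defensive.

(* S is always a rectangle A x Y, with |Y| = |A| or |A| + 1 according to the
   flag, all of whose points lie in DAff(B): each new point (x, y) equals
   (x, y') + (x', y) - (x', y') in the one-hot encoding, for three points
   already there.  So once S = G, all of G lies in DAff(B).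
   The expected number of further samples needed to reach S = G is an
   explicit potential that drops by exactly 1 in expectation at each step
   before S = G.  Summing tail probabilities then bounds P(S <> G after N
   samples) by the initial potential over N, and that potential is a
   harmonic-type sum at most 8 d ln d < N / c. *)

Section AffineSpan.
Variables (R : nzRingType) (d : nat).
Implicit Types (B : {set grid d}) (z : grid d).

Lemma mem_DAff B z : z \in B -> DAff R B z.
Proof.
move=> zB; exists (fun a => (a == z)%:R); split.
  by rewrite (bigD1 z) //= eqxx big1 ?addr0 // => a /andP[_ /negbTE ->].
move=> j; rewrite (bigD1 z) //= eqxx mul1r big1 ?addr0 //.
by move=> a /andP[_ /negbTE ->]; rewrite mul0r.
Qed.

Lemma DAffS B B' z : B \subset B' -> DAff R B z -> DAff R B' z.
Proof.
move=> sBB' [alpha [alpha1 sigmaE]].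
have restrict (f : grid d -> R) :
    \sum_(a in B') (if a \in B then f a else 0) = \sum_(a in B) f a.
  rewrite -big_mkcondr; apply: eq_bigl => a.
  by apply/andb_idl => /(subsetP sBB').
exists (fun a => if a \in B then alpha a else 0); split.
  by rewrite restrict.
move=> j; rewrite sigmaE -restrict; apply: eq_bigr => a _.
by case: (a \in B); rewrite ?mul0r.
Qed.

Lemma DAff_affine B z z1 z2 z3 :
  (forall j, sigma R z j = sigma R z1 j + sigma R z2 j - sigma R z3 j) ->
  DAff R B z1 -> DAff R B z2 -> DAff R B z3 -> DAff R B z.
Proof.
move=> sigmaE [a1 [s1 e1]] [a2 [s2 e2]] [a3 [s3 e3]].
exists (fun a => a1 a + a2 a - a3 a); split.
  by rewrite sumrB big_split /= s1 s2 s3 addrK.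
move=> j; rewrite sigmaE e1 e2 e3 -big_split -sumrB /=.
by apply: eq_bigr => a _; rewrite mulrBl mulrDl.
Qed.

Lemma sigma_rect (x x' y y' : 'I_d) j :
  sigma R (x, y) j = sigma R (x, y') j + sigma R (x', y) j - sigma R (x', y') j.
Proof. by case: j => i; rewrite /sigma /= ?addrK // addrAC subrr add0r. Qed.

Lemma DAff_rect B (x x' y y' : 'I_d) :
  DAff R B (x, y') -> DAff R B (x', y) -> DAff R B (x', y') -> DAff R B (x, y).
Proof. exact/DAff_affine/sigma_rect. Qed.

End AffineSpan.

Section Rectangles.
Variable d : nat.
Local Notation T := (grid d).
Implicit Types (A Y : {set 'I_d}) (B : {set T}) (g z : T) (st : state d).

Lemma Sx_setX A Y : Y != set0 -> Sx (setX A Y) = A.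
Proof.
case/set0Pn => y yY; apply/setP => x; apply/imsetP/idP => [[z]|xA].
  by rewrite inE => /andP[z1A _] ->.
by exists (x, y); rewrite ?inE ?xA.
Qed.

Lemma Sy_setX A Y : A != set0 -> Sy (setX A Y) = Y.
Proof.
case/set0Pn => x xA; apply/setP => y; apply/imsetP/idP => [[z]|yY].
  by rewrite inE => /andP[_ z2Y] ->.
by exists (x, y); rewrite ?inE ?xA.
Qed.

Definition finished st := st.1.1 == [set: T].

Lemma step_finished st g : finished st -> step st g = st.
Proof. by case: st => [[S B] fx]; rewrite /finished /step /= => ->. Qed.

Lemma step_rect_x A Y B g : Y != set0 -> setX A Y != setT ->
  step (setX A Y, B, true) g =
  if (g.1 \in A) && (g.2 \notin Y) then (setX A (g.2 |: Y), g |: B, false)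
  else (setX A Y, B, true).
Proof.
move=> Y0 notT; rewrite /step (negbTE notT) Sx_setX // inE.
case: (g.1 \in A) => //=; case: (g.2 \in Y) => //=.
by congr (_, _, _); apply/setP => z; rewrite !inE -andb_orr orbC.
Qed.

Lemma step_rect_y A Y B g : A != set0 -> setX A Y != setT ->
  step (setX A Y, B, false) g =
  if (g.1 \notin A) && (g.2 \in Y) then (setX (g.1 |: A) Y, g |: B, true)
  else (setX A Y, B, false).
Proof.
move=> A0 notT; rewrite /step (negbTE notT) Sy_setX // inE.
case: (g.2 \in Y); rewrite ?andbF ?andbT //=; case: (g.1 \in A) => //=.
by congr (_, _, _); apply/setP => z; rewrite !inE -andb_orl orbC.
Qed.

Definition rectangular st := exists A Y,
  [/\ st.1.1 = setX A Y, (0 < #|A|)%N & #|Y| = (#|A| + ~~ st.2)%N].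

Lemma rectangular_init g : rectangular (init_state g).
Proof.
exists [set g.1], [set g.2]; rewrite !cards1; split => //=.
by apply/setP => z; rewrite !inE -xpair_eqE -!surjective_pairing.
Qed.

Lemma rectangular_step st g : rectangular st -> rectangular (step st g).
Proof.
case: st => [[S B] fx] [A [Y [SE A_gt0 cardY]]]; rewrite /= in SE cardY; subst S.
have A0 : A != set0 by rewrite -card_gt0.
have Y0 : Y != set0 by rewrite -card_gt0 cardY ltn_addr.
have [fin|notT] := boolP (finished (setX A Y, B, fx)).
  by rewrite step_finished //; exists A, Y.
case: fx cardY notT => cardY notT.
  rewrite step_rect_x //; case: ifP => [/andP[_ g2Y]|_]; last by exists A, Y.
  by exists A, (g.2 |: Y); rewrite cardsU1 g2Y cardY addn0 addn1.
rewrite step_rect_y //; case: ifP => [/andP[g1A _]|_]; last by exists A, Y.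
by exists (g.1 |: A), Y; rewrite cardsU1 g1A cardY addn1 add1n addn0.
Qed.

End Rectangles.

Section Spanned.
Variables (R : nzRingType) (d : nat).
Local Notation T := (grid d).
Implicit Types (g : T) (st : state d).

Definition spanned st := forall z, z \in st.1.1 -> DAff R st.1.2 z.

Lemma spanned_init g : spanned (init_state g).
Proof. by move=> z /= zg; apply: mem_DAff. Qed.

Lemma spanned_step st g : rectangular st -> spanned st -> spanned (step st g).
Proof.
case: st => [[S B] fx] [A [Y [SE A_gt0 cardY]]]; rewrite /= in SE cardY; subst S.
move=> span; have {}span : forall z, z \in setX A Y -> DAff R B z := span.
have A0 : A != set0 by rewrite -card_gt0.
have Y0 : Y != set0 by rewrite -card_gt0 cardY ltn_addr.
have [fin|notT] := boolP (finished (setX A Y, B, fx)); first by rewrite step_finished.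
have span_g (z : T) : z \in setX A Y -> DAff R (g |: B) z.
  by move=> zS; apply: DAffS (span z zS); apply: subsetUr.
have g_span : DAff R (g |: B) (g.1, g.2).
  by apply: mem_DAff; rewrite -surjective_pairing setU11.
case: fx notT {cardY} => notT.
  rewrite step_rect_x //; case: ifP => [/andP[g1A _]|_]; last exact: span.
  case/set0Pn: Y0 => y yY [x1 x2] /=; rewrite !inE /= => /andP[x1A /orP[/eqP->|x2Y]].
    by apply: (DAff_rect (x' := g.1) (y' := y)) => //;
      apply: span_g; rewrite inE ?x1A ?g1A.
  by apply: span_g; rewrite inE x1A.
rewrite step_rect_y //; case: ifP => [/andP[_ g2Y]|_]; last exact: span.
case/set0Pn: A0 => x xA [x1 x2] /=; rewrite !inE /= => /andP[/orP[/eqP->|x1A] x2Y].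
  by apply: (DAff_rect (x' := x) (y' := g.2)) => //; apply: span_g; rewrite inE ?xA.
by apply: span_g; rewrite inE x1A.
Qed.

Lemma run_spanned s : spanned (run s).
Proof.
case: s => [|g s] /=; first by move=> z; rewrite inE.
have : rectangular (init_state g) /\ spanned (init_state g).
  by split; [apply: rectangular_init | apply: spanned_init].
elim: s (init_state g) => [|g' s IH] st [rect span] //=.
by apply: IH; split; [apply: rectangular_step | apply: spanned_step].
Qed.

End Spanned.

Section Average.
Variables (R : numFieldType) (T : finType).
Implicit Types (f h : T -> R).

Lemma sumr_indicator (C : {set T}) : \sum_g ((g \in C)%:R : R) = #|C|%:R.
Proof.
rewrite -sum1_card natr_sum [RHS]big_mkcond.
by apply: eq_bigr => g _; case: (g \in C).
Qed.

Definition avg f : R := (\sum_g f g) / #|T|%:R.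

Lemma eq_avg f h : f =1 h -> avg f = avg h.
Proof. by move=> fh; rewrite /avg (eq_bigr _ (fun g _ => fh g)). Qed.

Lemma ler_avg f h : (forall g, f g <= h g) -> avg f <= avg h.
Proof. by move=> fh; rewrite ler_wpM2r ?invr_ge0 ?ler0n // ler_sum. Qed.

Lemma avg_cst a : (0 < #|T|)%N -> avg (fun=> a) = a.
Proof.
by move=> T_gt0; rewrite /avg sumr_const -[a *+ _]mulr_natr mulfK // pnatr_eq0 -lt0n.
Qed.

Lemma avg_sub_indicator a b (C : {set T}) : (0 < #|T|)%N ->
  avg (fun g => a - (g \in C)%:R * b) = a - #|C|%:R * b / #|T|%:R.
Proof.
move=> T_gt0; rewrite /avg sumrB sumr_const -mulr_suml sumr_indicator.
by rewrite mulrBl -[a *+ _]mulr_natr mulfK // pnatr_eq0 -lt0n.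
Qed.

End Average.

Section FfunCons.
Variables (T : finType) (n : nat).

Definition ffun_cons (x : T) (f : {ffun 'I_n -> T}) : {ffun 'I_n.+1 -> T} :=
  [ffun i => if unlift ord0 i is Some j then f j else x].

Lemma map_ffun_cons x f :
  [seq ffun_cons x f i | i <- enum 'I_n.+1] = x :: [seq f i | i <- enum 'I_n].
Proof.
rewrite enum_ordSl /= ffunE unlift_none -map_comp; congr (_ :: _).
by apply: eq_map => i /=; rewrite ffunE liftK.
Qed.

Lemma big_ffun_cons (V : nmodType) (h : {ffun 'I_n.+1 -> T} -> V) :
  \sum_w h w = \sum_x \sum_(f : {ffun 'I_n -> T}) h (ffun_cons x f).
Proof.
rewrite pair_big /= (reindex (fun p : T * {ffun 'I_n -> T} => ffun_cons p.1 p.2)) //.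
exists (fun w : {ffun 'I_n.+1 -> T} => (w ord0, [ffun j : 'I_n => w (lift ord0 j)]))
  => [[x f] _ | w _] /=.
  congr pair; first by rewrite ffunE unlift_none.
  by apply/ffunP => j; rewrite !ffunE liftK.
by apply/ffunP => i; rewrite !ffunE; case: unliftP => [j ->|->]; rewrite ?ffunE.
Qed.

End FfunCons.

Section Drift.
Variables (R : realFieldType) (T : finType) (S : Type).
Variables (step : S -> T -> S) (done : pred S).
Hypothesis T_gt0 : (0 < #|T|)%N.
Hypothesis done_step : forall st g, done st -> done (step st g).

Fixpoint pr_undone n st : R :=
  if n is n'.+1 then avg (fun g => pr_undone n' (step st g)) else (~~ done st)%:R.

Lemma pr_undone_done n st : done st -> pr_undone n st = 0.
Proof.
elim: n st => [|n IH] st st_done /=; first by rewrite st_done.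
by rewrite /avg big1 ?mul0r // => g _; apply/IH/done_step.
Qed.

Lemma pr_undone_le1 n st : pr_undone n st <= 1.
Proof.
elim: n st => [|n IH] st /=; first by case: (~~ done st).
by rewrite -[leRHS](avg_cst 1 T_gt0); apply: ler_avg.
Qed.

Lemma pr_undone_succ n st : pr_undone n.+1 st <= pr_undone n st.
Proof.
elim: n st => [|n IH] st.
  have [st_done|st_undone] := boolP (done st); first by rewrite !pr_undone_done.
  by rewrite [leRHS]/= st_undone pr_undone_le1.
by apply: ler_avg => g; apply: IH.
Qed.

Lemma pr_undone_nonincr st :
  {homo pr_undone^~ st : k n / (k <= n)%N >-> n <= k}.
Proof.
apply: homo_leq => [x|y x z yx zy|k]; [exact: lexx|exact: le_trans zy yx|].
exact: pr_undone_succ.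
Qed.

Lemma sum_undone_foldl n st :
  \sum_(w : {ffun 'I_n -> T})
     (~~ done (foldl step st [seq w i | i <- enum 'I_n]))%:R
  = #|T|%:R ^+ n * pr_undone n st.
Proof.
elim: n st => [|n IH] st.
  by rewrite enum_ord0 /= sumr_const card_ffun card_ord expr0 mul1r.
rewrite big_ffun_cons; under eq_bigr do under eq_bigr do rewrite map_ffun_cons.
under eq_bigr do rewrite IH.
rewrite -mulr_sumr /= /avg exprSr -mulrA [_ * (_ / _)]mulrC divfK //.
by rewrite pnatr_eq0 -lt0n.
Qed.

Variables (inv : S -> Prop) (pot : S -> R).
Hypothesis inv_step : forall st g, inv st -> inv (step st g).
Hypothesis pot_ge0 : forall st, inv st -> 0 <= pot st.
Hypothesis pot_drift : forall st, inv st -> ~~ done st ->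
  avg (fun g => pot (step st g)) <= pot st - 1.

Lemma sum_pr_undone_le_pot n st : inv st -> \sum_(k < n) pr_undone k st <= pot st.
Proof.
elim: n st => [|n IH] st inv_st; first by rewrite big_ord0 pot_ge0.
have [st_done|st_undone] := boolP (done st).
  by rewrite big1 ?pot_ge0 // => k _; apply: pr_undone_done.
rewrite big_ord_recl /= st_undone.
have -> : \sum_(k < n) pr_undone (lift ord0 k) st =
          avg (fun g => \sum_(k < n) pr_undone k (step st g)).
  by rewrite /avg exchange_big mulr_suml; apply: eq_bigr => k _; rewrite lift0.
have IH_avg := ler_avg (fun g => IH _ (inv_step g inv_st)).
have := le_trans IH_avg (pot_drift inv_st st_undone).
by rewrite lerBrDl.
Qed.

Lemma pr_undone_le_pot n st : inv st -> n.+1%:R * pr_undone n st <= pot st.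
Proof.
move=> inv_st; apply: le_trans (sum_pr_undone_le_pot n.+1 inv_st).
have -> : n.+1%:R * pr_undone n st = \sum_(k < n.+1) pr_undone n st.
  by rewrite sumr_const card_ord mulr_natl.
by apply: ler_sum => k _; apply: pr_undone_nonincr; rewrite -ltnS.
Qed.

End Drift.

Section ExpectedWait.
Variables (R : realFieldType) (d : nat).
Local Notation T := (grid d).
Implicit Types (k l : nat) (st : state d).

(* From flag x with |S_x| = |S_y| = k, a sample succeeds with probability
   k (d - k) / d^2; from flag y with |S_x| = k and |S_y| = k + 1, with
   probability (k + 1) (d - k) / d^2.  The waits are the inverses, and
   [expected_wait] is the expected number of samples until S = G. *)
Definition wait_x k : R := (d * d)%:R / (k * (d - k))%:R.
Definition wait_y k : R := (d * d)%:R / (k.+1 * (d - k))%:R.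
Definition wait_from k : R := \sum_(k <= l < d) (wait_x l + wait_y l).

Definition expected_wait st : R :=
  let k := #|Sx st.1.1| in if st.2 then wait_from k else wait_y k + wait_from k.+1.

Lemma wait_from_ge0 k : 0 <= wait_from k.
Proof. by rewrite sumr_ge0 // => l _; rewrite addr_ge0 ?divr_ge0. Qed.

Lemma expected_wait_ge0 st : 0 <= expected_wait st.
Proof.
by rewrite /expected_wait; case: st.2; rewrite ?addr_ge0 ?divr_ge0 ?wait_from_ge0.
Qed.

Lemma wait_from_rec k : (k < d)%N -> wait_from k = wait_x k + wait_y k + wait_from k.+1.
Proof. by move=> k_lt_d; rewrite /wait_from big_ltn. Qed.

Lemma expected_wait_init g : expected_wait (init_state g) = wait_from 1.
Proof. by rewrite /expected_wait /= /Sx imset_set1 cards1. Qed.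

Lemma card_grid : #|T| = (d * d)%N.
Proof. by rewrite card_prod card_ord. Qed.

Lemma max_card_ord (X : {set 'I_d}) : (#|X| <= d)%N.
Proof. by rewrite -[leqRHS]card_ord max_card. Qed.

Lemma card_setC_ord (Y : {set 'I_d}) : #|~: Y| = (d - #|Y|)%N.
Proof.
by apply/eqP; rewrite -(eqn_add2l #|Y|) cardsC card_ord subnKC ?max_card_ord.
Qed.

Lemma mul_wait_x k : (0 < k < d)%N -> (k * (d - k))%:R * wait_x k = #|T|%:R.
Proof.
case/andP=> k_gt0 k_lt_d; rewrite card_grid mulrC divfK //.
by rewrite pnatr_eq0 muln_eq0 negb_or -!lt0n k_gt0 subn_gt0 k_lt_d.
Qed.

Lemma mul_wait_y k : (k < d)%N -> (k.+1 * (d - k))%:R * wait_y k = #|T|%:R.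
Proof.
move=> k_lt_d; rewrite card_grid mulrC divfK //.
by rewrite pnatr_eq0 muln_eq0 negb_or -!lt0n subn_gt0 k_lt_d.
Qed.

Lemma expected_wait_rect (A Y : {set 'I_d}) B fx : Y != set0 ->
  expected_wait (setX A Y, B, fx) =
  if fx then wait_from #|A| else wait_y #|A| + wait_from #|A|.+1.
Proof. by move=> Y0; rewrite /expected_wait /= Sx_setX. Qed.

Lemma avg_expected_wait_step st : rectangular st -> ~~ finished st ->
  avg (fun g => expected_wait (step st g)) = expected_wait st - 1.
Proof.
case: st => [[S B] fx] [A [Y [SE A_gt0 cardY]]]; rewrite /= in SE cardY; subst S.
have A0 : A != set0 by rewrite -card_gt0.
have Y0 : Y != set0 by rewrite -card_gt0 cardY ltn_addr.
have T_gt0 : (0 < #|T|)%N.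
  by rewrite card_grid muln_gt0 andbb (leq_trans A_gt0) ?max_card_ord.
rewrite expected_wait_rect //; set k := #|A| in A_gt0 cardY *.
case: fx cardY => cardY notT.
  rewrite addn0 in cardY.
  have k_lt_d : (k < d)%N.
    rewrite ltn_neqAle -cardY max_card_ord andbT; apply: contra notT => /eqP Yd.
    have full (X : {set 'I_d}) : #|X| = d -> X = setT.
      by move=> Xd; apply/eqP; rewrite eqEcard subsetT cardsT card_ord Xd /=.
    rewrite /finished /= (full _ Yd) (full A); last exact: etrans (esym cardY) Yd.
    by apply/eqP/setP => z; rewrite !inE.
  have waitE g : expected_wait (step (setX A Y, B, true) g) =
      wait_from k - (g \in setX A (~: Y))%:R * wait_x k.
    rewrite step_rect_x // !inE; case: ifP => _.
      rewrite expected_wait_rect; last by apply/set0Pn; exists g.2; rewrite setU11.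
      by rewrite -/k (wait_from_rec k_lt_d) /=; ring.
    by rewrite expected_wait_rect // mul0r subr0.
  rewrite (eq_avg waitE) avg_sub_indicator // cardsX card_setC_ord cardY.
  rewrite mul_wait_x ?A_gt0 //.
  by rewrite divff // pnatr_eq0 -lt0n.
rewrite addn1 in cardY.
have k_lt_d : (k < d)%N by rewrite -cardY max_card_ord.
have waitE g : expected_wait (step (setX A Y, B, false) g) =
    wait_y k + wait_from k.+1 - (g \in setX (~: A) Y)%:R * wait_y k.
  rewrite step_rect_y // !inE; case: ifP => [/andP[g1A _]|_].
    by rewrite expected_wait_rect // cardsU1 g1A /=; ring.
  by rewrite expected_wait_rect // mul0r subr0.
rewrite (eq_avg waitE) avg_sub_indicator // cardsX card_setC_ord cardY mulnC.
rewrite mul_wait_y //.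
by rewrite divff // pnatr_eq0 -lt0n.
Qed.

Lemma wait_y_le_wait_x l : (0 < l < d)%N -> wait_y l <= wait_x l.
Proof.
case/andP=> l_gt0 l_lt_d; rewrite ler_wpM2l // lef_pV2 ?posrE ?ltr0n //;
  rewrite ?muln_gt0 ?subn_gt0 ?l_lt_d ?l_gt0 //.
by rewrite ler_nat leq_mul.
Qed.

Lemma wait_xE l : (0 < l < d)%N -> wait_x l = d%:R / l%:R + d%:R / (d - l)%:R.
Proof.
case/andP=> l_gt0 l_lt_d; rewrite /wait_x !natrM.
have -> : (d%:R : R) = l%:R + (d - l)%:R by rewrite -natrD subnKC // ltnW.
by field; rewrite !pnatr_eq0 -!lt0n l_gt0 subn_gt0 l_lt_d.
Qed.

End ExpectedWait.

Section HarmonicBound.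
Variable R : realType.

Lemma inv_le_2ln_succ l : (0 < l)%N -> (l%:R : R)^-1 <= 2 * (ln l.+1%:R - ln l%:R).
Proof.
(* ln (1 - 1/(l+1)) <= -1/(l+1), and 1/l <= 2/(l+1). *)
move=> l_gt0; rewrite -[l.+1%:R]natr1; set a : R := l%:R.
have a_ge1 : 1 <= a by rewrite ler1n.
have a_gt0 : 0 < a by apply: lt_le_trans a_ge1.
have a1_gt0 : 0 < a + 1 by rewrite addr_gt0.
have ln_ratio : ln (a / (a + 1)) <= - (a + 1)^-1.
  have -> : a / (a + 1) = 1 + - (a + 1)^-1 by field; rewrite gt_eqF.
  by rewrite le_ln1Dx // ltrN2 invf_lt1 // ltrDr.
rewrite ln_div ?posrE // in ln_ratio.
have inv_le : a^-1 <= 2 * (a + 1)^-1.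
  rewrite ler_pdivlMr // mulrDr mulr1 mulVf ?gt_eqF //.
  have : a^-1 <= 1 by rewrite invf_le1.
  lra.
lra.
Qed.

Lemma harmonic_le_2ln n : (0 < n)%N -> \sum_(1 <= l < n) (l%:R : R)^-1 <= 2 * ln n%:R.
Proof.
move=> n_gt0; apply: le_trans (_ : _ <= \sum_(1 <= l < n) 2 * (ln l.+1%:R - ln l%:R)) _.
  by apply: ler_sum_nat => l /andP[l_gt0 _]; apply: inv_le_2ln_succ.
by rewrite -mulr_sumr telescope_sumr // mulr1n ln1 subr0.
Qed.

Lemma wait_from1_le d : (0 < d)%N -> wait_from R d 1 <= 8 * d%:R * ln d%:R.
Proof.
move=> d_gt0; set D : R := d%:R.
have D_ge0 : 0 <= D by rewrite ler0n.
have rem_le : wait_from R d 1 <= \sum_(1 <= l < d) (2 * D / l%:R + 2 * D / (d - l)%:R).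
  apply: ler_sum_nat => l /andP[l_gt0 l_lt_d].
  have l_range : (0 < l < d)%N by rewrite l_gt0.
  have := wait_y_le_wait_x R l_range; rewrite wait_xE // -/D; lra.
have sum_rev : \sum_(1 <= l < d) ((d - l)%:R : R)^-1 = \sum_(1 <= l < d) (l%:R : R)^-1.
  rewrite big_nat_rev; apply: eq_big_nat => l /andP[l_gt0 l_lt_d].
  by rewrite add1n subSS subKn // ltnW.
rewrite big_split /= -!mulr_sumr sum_rev in rem_le.
have : 4 * D * \sum_(1 <= l < d) (l%:R : R)^-1 <= 4 * D * (2 * ln D).
  by rewrite ler_wpM2l ?mulr_ge0 ?harmonic_le_2ln.
lra.
Qed.

End HarmonicBound.

Lemma finished_run_DAff (R : nzRingType) d (s : seq (grid d)) :
  finished (run s) -> forall z, DAff R (run s).1.2 z.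
Proof. by move=> /eqP S_T z; apply: run_spanned; rewrite S_T inE. Qed.

Lemma unif_prob_ge (R : realType) d N (E : {ffun 'I_N -> grid d} -> Prop)
    (bad : pred {ffun 'I_N -> grid d}) :
  (0 < d)%N -> (forall w, ~~ bad w -> E w) ->
  1 - (\sum_w (bad w)%:R) / #|{: {ffun 'I_N -> grid d}}|%:R <= unif_prob R E.
Proof.
move=> d_gt0 badNE; set good := [set w | `[< E w >]].
have M_gt0 : 0 < (#|good| + #|~: good|)%:R :> R.
  by rewrite cardsC ltr0n card_ffun expn_gt0 card_grid muln_gt0 d_gt0.
have sum_bad : #|~: good|%:R <= \sum_w ((bad w)%:R : R).
  rewrite -sumr_indicator; apply: ler_sum => w _; rewrite !inE.
  rewrite ler_nat; case: (boolP (bad w)) => [_|/badNE Ew]; first exact: leq_b1.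
  by rewrite asboolT.
rewrite /unif_prob -/good -(cardsC good) lerBlDr -mulrDl ler_pdivlMr //.
by rewrite mul1r natrD lerD2l.
Qed.

Lemma pr_unfinished_run_le (R : realFieldType) d n : (0 < d)%N ->
  (\sum_(w : {ffun 'I_n.+1 -> grid d})
      (~~ finished (run [seq w i | i <- enum 'I_n.+1]))%:R)
    / #|{: {ffun 'I_n.+1 -> grid d}}|%:R
  <= wait_from R d 1 / n.+1%:R.
Proof.
move=> d_gt0; have T_gt0 : (0 < #|grid d|)%N by rewrite card_grid muln_gt0 d_gt0.
rewrite card_ffun card_ord natrX ler_pdivrMr ?exprn_gt0 ?ltr0n // mulrC.
rewrite big_ffun_cons; under eq_bigr do under eq_bigr do rewrite map_ffun_cons /=.
under eq_bigr do rewrite (sum_undone_foldl R (@step d) (@finished d) T_gt0).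
apply: le_trans (_ : _ <= \sum_(g : grid d)
                            #|grid d|%:R ^+ n * (wait_from R d 1 / n.+1%:R)) _;
  last by rewrite sumr_const -[_ *+ #|_|]mulr_natl exprS mulrA.
apply: ler_sum => g _; rewrite ler_wpM2l ?exprn_ge0 ?ler0n //.
rewrite ler_pdivlMr ?ltr0n // mulrC -(expected_wait_init R g).
apply: (@pr_undone_le_pot R _ _ (@step d) (@finished d) T_gt0 _ (@rectangular d)).
- by move=> st g' fin; rewrite step_finished.
- exact: rectangular_step.
- by move=> st _; apply: expected_wait_ge0.
- by move=> st rect notfin; rewrite avg_expected_wait_step.
- exact: rectangular_init.
Qed.

Unset Implicit Arguments.
Set Strict Implicit.

Theorem theorem5 (R : realType) (d N : nat) (c : R) :
  (0 < d)%N -> 0 < c ->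
  8 * c * d%:R * ln (d%:R) < N%:R ->
  1 - c^-1 <=
    unif_prob R (fun w : {ffun 'I_N -> grid d} =>
                   forall z : grid d, DAff R (final_B w) z).
Proof.
move=> d_gt0 c_gt0 N_gt.
case: N N_gt => [|n] N_gt.
  have : 0 <= 8 * c * d%:R * ln (d%:R : R).
    by rewrite !mulr_ge0 ?ler0n ?ln_ge0 ?ler1n // ltW.
  lra.
have wait_le : wait_from R d 1 / n.+1%:R <= c^-1.
  rewrite ler_pdivrMr ?ltr0n // ler_pdivlMl //.
  have : c * wait_from R d 1 <= c * (8 * d%:R * ln d%:R).
    by rewrite ler_pM2l // wait_from1_le.
  lra.
pose unfinished (w : {ffun 'I_n.+1 -> grid d}) :=
  ~~ finished (run [seq w i | i <- enum 'I_n.+1]).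
apply: le_trans (@unif_prob_ge R d n.+1 _ unfinished d_gt0 _).
  by rewrite lerD2l lerN2 (le_trans (pr_unfinished_run_le R n d_gt0)).
by move=> w /negPn; apply: finished_run_DAff.
Qed.
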